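(* Let $N\to\infty$, let $n=n(N)\ge 2$ be an integer, and let $p=p(N)$ satisfy $p N^2\to\infty$ (i.e. $\frac{1}{N^2}\ll p$) and $p\le \frac1N$. Then asymptotically almost surely $\mathrm{ex}(G(N,p),P_{n+1})=\Theta(pN^2)$, i.e. there are absolute constants $c_1,c_2>0$ such that a.a.s. $c_1pN^2\le \mathrm{ex}(G(N,p),P_{n+1})\le c_2pN^2$. In particular, a.a.s. $\mathrm{ex}(G(N,1/N),P_{n+1})\ge N/15$.
   Context: $G(N,p)$ denotes the Erdős–Rényi random graph on vertex set $[N]=\{1,\dots,N\}$ in which each pair is an edge independently with probability $p$. $P_k$ denotes the path on $k$ vertices. For graphs $G,F$, $\mathrm{ex}(G,F)$ is the maximum number of edges in an $F$-free subgraph of $G$. An event holds asymptotically almost surely (a.a.s.) if its probability tends to $1$ as $N\to\infty$. *)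

From HB Require Import structures.
From mathcomp Require Import all_boot all_order all_algebra.
From mathcomp Require Import reals.
Set Implicit Arguments. Unset Strict Implicit. Unset Printing Implicit Defensive.
Import Order.TTheory GRing.Theory Num.Theory.

(* Graphs on vertex set [N] = 'I_N are represented by their edge sets,
   i.e. sets of 2-element subsets of 'I_N. *)
Definition pairs (N : nat) : {set {set 'I_N}} := [set e : {set 'I_N} | #|e| == 2].

Definition is_graph N (G : {set {set 'I_N}}) : bool := G \subset pairs N.

(* H contains a (not necessarily induced) copy of P_k, the path on k vertices:
   k distinct vertices f 0, ..., f (k-1) with {f i, f (i+1)} an edge. *)
Definition has_path N (H : {set {set 'I_N}}) (k : nat) : bool :=
  [exists f : {ffun 'I_k -> 'I_N},
     injectiveb f &&
     [forall i : 'I_k, forall j : 'I_k,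
        (val j == (val i).+1) ==> ([set f i; f j] \in H)]].

Definition ex_path N (G : {set {set 'I_N}}) (k : nat) : nat :=
  \max_(H in powerset G | ~~ has_path H k) #|H|.

Local Open Scope ring_scope.

Definition gnp_weight (R : realType) (N : nat) (p : R) (G : {set {set 'I_N}}) : R :=
  p ^+ #|G| * (1 - p) ^+ (#|pairs N| - #|G|)%N.

Definition gnp_prob (R : realType) (N : nat) (p : R)
    (E : {set {set 'I_N}} -> bool) : R :=
  \sum_(G in powerset (pairs N) | E G) gnp_weight p G.

Definition aas (R : realType) (P : nat -> R) : Prop :=
  forall eps : R, 0 < eps -> exists N0 : nat, forall N : nat, (N0 <= N)%N ->
    1 - eps <= P N.

Definition tends_to_infty (R : realType) (x : nat -> R) : Prop :=
  forall M : R, exists N0 : nat, forall N : nat, (N0 <= N)%N -> M <= x N.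

From HB Require Import structures.
From mathcomp Require Import all_boot all_order all_algebra.
From mathcomp Require Import reals.
From mathcomp Require Import zify ring lra.
Import Order.TTheory GRing.Theory Num.Theory.
Set Implicit Arguments. Unset Strict Implicit. Unset Printing Implicit Defensive.

(* Let V(G) be the set of non-isolated vertices of a graph G.  Deleting one of two edges
   sharing a vertex loses at most one vertex of V(G), so G contains a matching H with
   |V(G)| <= |H| + |G|.  A matching has no P_3, hence
     N - I(G) - |G| <= ex(G, P_{n+1}) <= |G|,
   where I(G) is the number of isolated vertices.  In G(N,p) with L = p N^2 and p N <= 1,
   a second-order Bernoulli bound on E I = N (1-p)^(N-1) gives
   E|G| + E I + L/15 + L/500 <= N, while Var |G| <= L and Var I <= 2L.  Chebyshev's
   inequality at deviation L/1000 for |G| and for I then yields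
   L/15 <= ex(G, P_{n+1}) <= 2L outside an event of probability at most 3*10^6/L. *)

Lemma trivIset_path_free N (H : {set {set 'I_N}}) k :
  (3 <= k)%N -> trivIset H -> ~~ has_path H k.
Proof.
move=> k3 /trivIsetP tH; apply/existsP => -[f /andP [/injectiveP inj /forallP Hf]].
pose i0 := @Ordinal k 0 ltac:(lia); pose i1 := @Ordinal k 1 ltac:(lia).
pose i2 := @Ordinal k 2 ltac:(lia).
have e1 : [set f i0; f i1] \in H by have := forallP (Hf i0) i1; rewrite eqxx.
have e2 : [set f i1; f i2] \in H by have := forallP (Hf i1) i2; rewrite eqxx.
have ne : [set f i0; f i1] != [set f i1; f i2].
  apply/negP => /eqP E.
  have : f i0 \in [set f i1; f i2] by rewrite -E set21.
  by rewrite !inE => /orP [] /eqP /inj /(congr1 val).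
have := tH _ _ e1 e2 ne; rewrite -setI_eq0 => /eqP E.
have : f i1 \in [set f i0; f i1] :&: [set f i1; f i2] by rewrite !inE !eqxx orbT.
by rewrite E inE.
Qed.

Lemma leq_card_cover_pairs N (G : {set {set 'I_N}}) :
  G \subset pairs N -> (#|cover G| <= #|G| + #|G|)%N.
Proof.
move=> Gp; have [le _] := leq_card_cover G; apply: leq_trans le _.
have -> : (\sum_(A in G) #|A| = #|G| * 2)%N.
  by rewrite -sum_nat_const; apply: eq_bigr => A /(subsetP Gp); rewrite inE => /eqP.
lia.
Qed.

Lemma leq_card_cover_setD1 N (G : {set {set 'I_N}}) e1 e2 v :
  G \subset pairs N -> e1 \in G -> e2 \in G -> e1 != e2 -> v \in e1 -> v \in e2 ->
  (#|cover G| <= (#|cover (G :\ e1)|).+1)%N.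
Proof.
move=> Gp e1G e2G ne v1 v2.
have ce : #|e1 :\ v| = 1%N.
  by move: (subsetP Gp e1 e1G); rewrite inE (cardsD1 v e1) v1 => /eqP; lia.
have sub : cover G \subset cover (G :\ e1) :|: (e1 :\ v).
  apply/subsetP => x /bigcupP [e eG xe]; rewrite in_setU.
  case: (eqVneq e e1) => [Ee | nee]; last first.
    by apply/orP; left; apply/bigcupP; exists e; rewrite // !inE nee.
  subst e; case: (eqVneq x v) => [-> | nxv]; last by rewrite !inE nxv xe orbT.
  by apply/orP; left; apply/bigcupP; exists e2; rewrite // !inE eq_sym ne.
have := subset_leq_card sub; have [le _] := leq_card_setU (cover (G :\ e1)) (e1 :\ v).
lia.
Qed.

Lemma exists_trivIset_cover N (G : {set {set 'I_N}}) : G \subset pairs N ->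
  exists H : {set {set 'I_N}},
    [/\ H \subset G, trivIset H & (#|cover G| <= #|H| + #|G|)%N].
Proof.
have [m] := ubnP #|G|; elim: m G => // m IH G /ltnSE Gm Gp.
case: (boolP [exists v, exists e1, exists e2,
   [&& e1 \in G, e2 \in G, e1 != e2, v \in e1 & v \in e2]]).
- move=> /existsP [v /existsP [e1 /existsP [e2 /and5P [e1G e2G ne v1 v2]]]].
  have GD1 := cardsD1 e1 G; rewrite e1G in GD1.
  have [|H [HG tH cH]] := IH (G :\ e1) _ (subset_trans (subsetDl G _) Gp); first lia.
  exists H; split => //; first exact: subset_trans HG (subsetDl _ _).
  have := leq_card_cover_setD1 Gp e1G e2G ne v1 v2; lia.
- move=> /existsPn noshare; exists G; split => //; last exact: leq_card_cover_pairs.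
  apply/trivIsetP => e f eG fG nef; rewrite -setI_eq0; apply/eqP/setP => v.
  rewrite !inE; apply/negP => /andP [ve vf].
  by move: (noshare v) => /existsPn /(_ e) /existsPn /(_ f); rewrite eG fG nef ve vf.
Qed.

Lemma leq_card_ex_path N (G H : {set {set 'I_N}}) k :
  H \subset G -> ~~ has_path H k -> (#|H| <= ex_path G k)%N.
Proof.
move=> HG nH; apply: (leq_bigmax_cond (F := fun H0 : {set {set 'I_N}} => #|H0|)).
by rewrite powersetE HG.
Qed.

Lemma ex_path_leq_card N (G : {set {set 'I_N}}) k : (ex_path G k <= #|G|)%N.
Proof.
by apply/bigmax_leqP => H /andP [HG _]; apply: subset_leq_card; rewrite -powersetE.
Qed.

Lemma card_cover_leq_ex_path N (G : {set {set 'I_N}}) n : G \subset pairs N -> (2 <= n)%N ->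
  (#|cover G| <= ex_path G n.+1 + #|G|)%N.
Proof.
move=> Gp n2; have [H [HG tH cH]] := exists_trivIset_cover Gp.
have := leq_card_ex_path HG (trivIset_path_free (k := n.+1) ltac:(lia) tH); lia.
Qed.

Definition star N (v : 'I_N) : {set {set 'I_N}} := [set e in pairs N | v \in e].

Definition isolated N (G : {set {set 'I_N}}) : {set 'I_N} := ~: cover G.

Lemma card_pairs N : (#|pairs N| * 2 = N * N.-1)%N.
Proof.
rewrite /pairs card_draws card_ord.
by have := bin_ffact N 2; rewrite ffactnS ffactn1 => <-.
Qed.

Lemma star_pairs N (v : 'I_N) : star v \subset pairs N.
Proof. by apply/subsetP => e; rewrite inE => /andP []. Qed.

Lemma card_star N (v : 'I_N) : #|star v| = N.-1.
Proof.
have -> : star v = [set [set v; w] | w in [set~ v]].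
  apply/setP => e; rewrite inE; apply/andP/imsetP.
    rewrite inE => -[/cards2P [x [y [xy ->]]]]; rewrite !inE => /orP [] /eqP ->.
      by exists y; rewrite // !inE eq_sym.
    by exists x; rewrite ?inE // setUC.
  move=> [w]; rewrite !inE => wv ->; split; last by rewrite !inE eqxx.
  by rewrite cards2 (eq_sym v w) wv.
rewrite card_in_imset; first by rewrite cardsC1 card_ord.
move=> w1 w2; rewrite !inE => w1v w2v E.
have : w1 \in [set v; w2] by rewrite -E !inE eqxx orbT.
by rewrite !inE (negPf w1v) => /eqP.
Qed.

Lemma card_starU N (u v : 'I_N) : u != v -> (N.-1 + N.-2 <= #|star u :|: star v|)%N.
Proof.
move=> uv; have : (#|star u :&: star v| <= #|[set [set u; v]]|)%N.
  apply/subset_leq_card/subsetP => e; rewrite !inE => /andP [/andP [ep ue] /andP [_ ve]].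
  rewrite eq_sym eqEcard subUset !sub1set ue ve.
  by move: ep => /eqP ->; rewrite cards2 uv.
have := cardsUI (star u) (star v); rewrite cards1 !card_star; lia.
Qed.

Lemma in_isolated N (G : {set {set 'I_N}}) v : G \subset pairs N ->
  (v \in isolated G) = [disjoint G & star v].
Proof.
move=> Gp; rewrite inE; apply/idP/idP.
  move=> vG; rewrite -setI_eq0; apply/eqP/setP => e; rewrite !inE.
  apply/negP => /and3P [eG _ ve]; move/negP: vG; apply; apply/bigcupP; by exists e.
move=> d; apply/negP => /bigcupP [e eG ve].
move: d; rewrite -setI_eq0 => /eqP/setP/(_ e).
by rewrite in_setI in_set (subsetP Gp e eG) ve eG in_set0.
Qed.

Local Open Scope ring_scope.

Lemma sum_powerset_prod (R : comPzSemiRingType) (T : finType) (U : {set T})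
    (g : T -> bool -> R) :
  \sum_(G in powerset U) \prod_(e in U) g e (e \in G) = \prod_(e in U) (g e true + g e false).
Proof.
pose F e b := if e \in U then g e b else (if b then 0 else 1 : R).
have -> : \prod_(e in U) (g e true + g e false) = \prod_e \sum_(b : bool) F e b.
  rewrite big_mkcond /=; apply: eq_bigr => e _; rewrite big_bool /F.
  by case: (e \in U) => //=; rewrite add0r.
rewrite bigA_distr_bigA /=.
have -> : \sum_(G in powerset U) \prod_(e in U) g e (e \in G) =
          \sum_(G : {set T}) \prod_e F e (e \in G).
  rewrite [LHS]big_mkcond /=; apply: eq_big => // G _.
  rewrite powersetE; case: (boolP (G \subset U)) => GU.
    rewrite [LHS]big_mkcond /=; apply: eq_bigr => e _; rewrite /F.
    case eU: (e \in U) => //; suff /negPf -> : e \notin G by [].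
    by apply: contraFN eU; apply: (subsetP GU).
  have [e eG eU] := subsetPn GU.
  by rewrite (bigD1 e) //= /F (negPf eU) eG mul0r.
rewrite (reindex (fun f : {ffun T -> bool} => [set e | f e])) /=.
  by apply: eq_bigr => f _; apply: eq_bigr => e _; rewrite inE.
exists (fun G : {set T} => [ffun e => e \in G]) => [f _ | G _].
  by apply/ffunP => e; rewrite ffunE inE.
by apply/setP => e; rewrite inE ffunE.
Qed.

Lemma prod_if_mem (R : comPzSemiRingType) (T : finType) (A B : {set T}) (x : R) :
  A \subset B -> \prod_(e in B) (if e \in A then x else 1) = x ^+ #|A|.
Proof.
move=> AB; rewrite -big_mkcondr /= -prodr_const; apply: eq_bigl => e.
by case eA: (e \in A); rewrite ?andbF ?andbT // (subsetP AB).
Qed.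

Lemma natr_card_sum (R : pzSemiRingType) (T : finType) (A B : {set T}) : A \subset B ->
  (#|A|%:R : R) = \sum_(x in B) (x \in A)%:R.
Proof.
move=> AB; rewrite -sumr_const [LHS]big_mkcond [RHS]big_mkcond /=.
apply: eq_bigr => x _; case xA: (x \in A); first by rewrite (subsetP AB).
by case: (x \in B).
Qed.

Lemma disjoints0 (T : finType) (A : {set T}) : [disjoint A & set0].
Proof. by rewrite -setI_eq0 setI0. Qed.

Section RandomGraph.
Variables (R : realType) (N : nat) (p : R).
Hypotheses (p_ge0 : 0 <= p) (p_le1 : p <= 1).

Local Notation graph := {set {set 'I_N}}.

Definition Ex (f : graph -> R) := \sum_(G in powerset (pairs N)) gnp_weight p G * f G.

Definition Var (f : graph -> R) := Ex (fun G => f G ^+ 2) - Ex f ^+ 2.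

Lemma gnp_weight_ge0 (G : graph) : 0 <= gnp_weight p G.
Proof. by rewrite /gnp_weight mulr_ge0 // exprn_ge0 // subr_ge0. Qed.

Lemma gnp_weight_prod (G : graph) : G \subset pairs N ->
  gnp_weight p G = \prod_(e in pairs N) (if e \in G then p else 1 - p).
Proof.
move=> Gp; rewrite (bigID (fun e => e \in G)) /=.
rewrite (eq_bigr (fun _ => p)); last by move=> e /andP [_ ->].
rewrite [X in _ * X](eq_bigr (fun _ => 1 - p)); last by move=> e /andP [_ /negPf ->].
rewrite !prodr_const /gnp_weight; congr (_ ^+ _ * _ ^+ _).
  apply: eq_card => e /=; apply/idP/andP => [eG|[] //]; split => //.
  by rewrite (subsetP Gp).
by rewrite -{1}(setIidPr Gp) -cardsD; apply: eq_card => e /=; rewrite [LHS]inE andbC.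
Qed.

Lemma gnp_probE (E : graph -> bool) : gnp_prob p E = Ex (fun G => (E G)%:R).
Proof.
rewrite /gnp_prob /Ex big_mkcondr; apply: eq_bigr => G _.
by case: (E G); rewrite ?mulr1 ?mulr0.
Qed.

Lemma eq_Ex (f g : graph -> R) :
  (forall G : graph, G \subset pairs N -> f G = g G) -> Ex f = Ex g.
Proof. by move=> fg; apply: eq_bigr => G; rewrite powersetE => /fg ->. Qed.

Lemma ler_Ex (f g : graph -> R) :
  (forall G : graph, G \subset pairs N -> f G <= g G) -> Ex f <= Ex g.
Proof.
move=> fg; apply: ler_sum => G; rewrite powersetE => /fg le_fg.
by rewrite ler_wpM2l ?gnp_weight_ge0.
Qed.

Lemma Ex_sum (I : finType) (P : pred I) (f : I -> graph -> R) :
  Ex (fun G => \sum_(i | P i) f i G) = \sum_(i | P i) Ex (f i).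
Proof.
rewrite /Ex (eq_bigr (fun G => \sum_(i | P i) gnp_weight p G * f i G)).
  by rewrite exchange_big.
by move=> G _; rewrite mulr_sumr.
Qed.

Lemma ExD (f g : graph -> R) : Ex (fun G => f G + g G) = Ex f + Ex g.
Proof. by rewrite /Ex -big_split; apply: eq_bigr => G _; rewrite mulrDr. Qed.

Lemma ExZ c (f : graph -> R) : Ex (fun G => c * f G) = c * Ex f.
Proof. by rewrite /Ex mulr_sumr; apply: eq_bigr => G _; rewrite mulrCA. Qed.

Lemma Ex_sub_disjoint (S T : graph) :
  S \subset pairs N -> T \subset pairs N -> [disjoint S & T] ->
  Ex (fun G => ((S \subset G) && [disjoint G & T])%:R) = p ^+ #|S| * (1 - p) ^+ #|T|.
Proof.
move=> Sp Tp ST.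
pose g e (b : bool) := if b then (if e \in T then 0 else p)
                       else (if e \in S then 0 else 1 - p).
have -> : Ex (fun G => ((S \subset G) && [disjoint G & T])%:R) =
          \sum_(G in powerset (pairs N)) \prod_(e in pairs N) g e (e \in G).
  apply: eq_bigr => G; rewrite powersetE => Gp; rewrite gnp_weight_prod //.
  case: (boolP ((S \subset G) && [disjoint G & T])) => [/andP [SG GT]|].
    rewrite mulr1; apply: eq_bigr => e _; rewrite /g.
    case eG: (e \in G); first by rewrite (disjointFr GT eG).
    by have -> : (e \in S) = false by apply: contraFF eG; apply: (subsetP SG).
  rewrite negb_and mulr0 => /orP [/subsetPn [e eS eG] | /pred0Pn [e /andP [eG eT]]].
    by rewrite (bigD1 e) ?(subsetP Sp) //= /g (negPf eG) eS mul0r.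
  by rewrite (bigD1 e) ?(subsetP Tp) //= /g [e \in G]eG [e \in T]eT mul0r.
rewrite sum_powerset_prod -(prod_if_mem p Sp) -(prod_if_mem (1 - p) Tp) -big_split /=.
apply: eq_bigr => e _; rewrite /g.
case eS: (e \in S); case eT: (e \in T) => /=.
- by have := disjointFr ST eS; rewrite eT.
- by rewrite addr0 mulr1.
- by rewrite add0r mul1r.
- by rewrite addrC subrK mul1r.
Qed.

Lemma Ex1 : Ex (fun _ => 1) = 1.
Proof.
have := Ex_sub_disjoint (sub0set _) (sub0set _) (disjoints0 set0).
rewrite !cards0 !expr0 mulr1 => E; rewrite -[RHS]E; apply: eq_Ex => G _.
by rewrite sub0set disjoints0.
Qed.

Lemma VarE (X : graph -> R) : Var X = Ex (fun G => (X G - Ex X) ^+ 2).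
Proof.
rewrite (eq_Ex (g := fun G => X G ^+ 2 + (- 2 * Ex X * X G + Ex X ^+ 2 * 1))) => [|G _].
  by rewrite !ExD !ExZ Ex1 /Var; ring.
by ring.
Qed.

Lemma gnp_prob_chebyshev (X : graph -> R) t : 0 < t ->
  gnp_prob p (fun G => Ex X + t <= X G) <= Var X / t ^+ 2.
Proof.
move=> t0; rewrite gnp_probE VarE mulrC -ExZ; apply: ler_Ex => G _.
case: (boolP (Ex X + t <= X G)) => [le_t | _].
  by rewrite /= mulrC ler_pdivlMr ?exprn_gt0 // mul1r; nra.
by rewrite /= mulr_ge0 ?sqr_ge0 // invr_ge0 ltW // exprn_gt0.
Qed.

Lemma gnp_prob_union_bound (A B E : graph -> bool) :
  (forall G : graph, G \subset pairs N -> ~~ A G -> ~~ B G -> E G) ->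
  1 - gnp_prob p A - gnp_prob p B <= gnp_prob p E.
Proof.
move=> ABE; rewrite !gnp_probE.
have -> : 1 - Ex (fun G => (A G)%:R) - Ex (fun G => (B G)%:R) =
          Ex (fun G => 1 + ((-1) * (A G)%:R + (-1) * (B G)%:R)).
  by rewrite !ExD !ExZ Ex1; ring.
apply: ler_Ex => G /ABE; case: (A G); case: (B G); case: (E G) => //= h; lra.
Qed.

Lemma ler_gnp_prob (E F : graph -> bool) :
  (forall G : graph, G \subset pairs N -> E G -> F G) -> gnp_prob p E <= gnp_prob p F.
Proof.
move=> EF; rewrite !gnp_probE; apply: ler_Ex => G /EF.
by case: (E G); case: (F G) => //= h; have := h isT.
Qed.

End RandomGraph.

Section Moments.
Variables (R : realType) (N : nat) (p : R).
Hypotheses (p_ge0 : 0 <= p) (p_le1 : p <= 1).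

Local Notation Ex := (@Ex R N p).

Lemma Ex_mem e : e \in pairs N -> Ex (fun G => (e \in G)%:R) = p.
Proof.
move=> ep; have := Ex_sub_disjoint p (S := [set e]) (T := set0).
rewrite sub1set ep cards1 cards0 expr1 expr0 mulr1 => /(_ isT (sub0set _) (disjoints0 _)).
move=> E; rewrite -[RHS]E; apply: eq_Ex => G _.
by rewrite sub1set disjoints0 andbT.
Qed.

Lemma Ex_card : Ex (fun G => #|G|%:R) = #|pairs N|%:R * p.
Proof.
rewrite (eq_Ex p (g := fun G => \sum_(e in pairs N) (e \in G)%:R)); last first.
  by move=> G Gp; apply: natr_card_sum.
rewrite Ex_sum (eq_bigr (fun _ => p)); last by move=> e ep; apply: Ex_mem.
by rewrite sumr_const mulr_natl.
Qed.

Lemma Ex_card_sqr :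
  Ex (fun G => #|G|%:R ^+ 2) <= #|pairs N|%:R * p + #|pairs N|%:R ^+ 2 * p ^+ 2.
Proof.
rewrite (eq_Ex p (g := fun G => \sum_(e in pairs N) \sum_(f in pairs N)
     (([set e; f] \subset G) && [disjoint G & set0])%:R)); last first.
  move=> G Gp; rewrite expr2 (natr_card_sum R Gp) mulr_suml; apply: eq_bigr => e _.
  rewrite mulr_sumr; apply: eq_bigr => f _.
  by rewrite disjoints0 andbT subUset !sub1set -natrM mulnb.
rewrite Ex_sum.
apply: le_trans (_ : \sum_(e in pairs N) (#|pairs N|%:R * p ^+ 2 + p) <= _); last first.
  by rewrite sumr_const -mulr_natl le_eqVlt; apply/orP; left; apply/eqP; ring.
apply: ler_sum => e ep; rewrite Ex_sum.
apply: le_trans (_ : \sum_(f in pairs N) (p ^+ 2 + (f \in [set e])%:R * p) <= _).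
  apply: ler_sum => f fp.
  rewrite Ex_sub_disjoint ?subUset ?sub1set ?ep ?fp ?sub0set ?disjoints0 //.
  rewrite cards0 expr0 mulr1 inE.
  have [->|fe] := eqVneq f e; first by rewrite setUid cards1 expr1 mul1r lerDr sqr_ge0.
  by rewrite cards2 eq_sym fe mul0r addr0.
rewrite big_split /= sumr_const -mulr_suml -natr_card_sum ?sub1set // cards1 mul1r.
by rewrite mulr_natl.
Qed.

Lemma Ex_card_isolated : Ex (fun G => #|isolated G|%:R) = N%:R * (1 - p) ^+ N.-1.
Proof.
rewrite (eq_Ex p (g := fun G => \sum_(v in [set: 'I_N])
     ((set0 \subset G) && [disjoint G & star v])%:R)); last first.
  move=> G Gp; rewrite (natr_card_sum R (subsetT (isolated G))).
  by apply: eq_bigr => v _; rewrite sub0set in_isolated.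
rewrite Ex_sum (eq_bigr (fun _ => (1 - p) ^+ N.-1)).
  by rewrite sumr_const cardsT card_ord mulr_natl.
move=> v _; rewrite Ex_sub_disjoint ?sub0set ?star_pairs //; last first.
  by rewrite disjoint_sym disjoints0.
by rewrite cards0 expr0 mul1r card_star.
Qed.

Lemma Ex_card_isolated_sqr : Ex (fun G => #|isolated G|%:R ^+ 2) <=
   N%:R * (1 - p) ^+ N.-1 + N%:R * N.-1%:R * (1 - p) ^+ (N.-1 + N.-2).
Proof.
rewrite (eq_Ex p (g := fun G => \sum_(u in [set: 'I_N]) \sum_(v in [set: 'I_N])
     ((set0 \subset G) && [disjoint G & star u :|: star v])%:R)); last first.
  move=> G Gp; rewrite expr2 (natr_card_sum R (subsetT (isolated G))) mulr_suml.
  apply: eq_bigr => u _; rewrite mulr_sumr; apply: eq_bigr => v _.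
  rewrite sub0set !in_isolated // -natrM mulnb.
  by rewrite -!setI_eq0 setIUr setU_eq0.
rewrite Ex_sum.
apply: le_trans (_ : \sum_(u in [set: 'I_N])
    ((1 - p) ^+ N.-1 + N.-1%:R * (1 - p) ^+ (N.-1 + N.-2)) <= _); last first.
  by rewrite sumr_const cardsT card_ord -mulr_natl le_eqVlt; apply/orP; left; apply/eqP; ring.
apply: ler_sum => u _; rewrite Ex_sum (bigD1 u) ?in_setT //=.
rewrite Ex_sub_disjoint ?sub0set ?setUid ?star_pairs //; last by rewrite disjoint_sym disjoints0.
rewrite cards0 expr0 mul1r card_star lerD2l.
apply: le_trans (_ : \sum_(v in [set: 'I_N] | v != u) (1 - p) ^+ (N.-1 + N.-2) <= _).
  apply: ler_sum => v /andP [_ vu].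
  rewrite Ex_sub_disjoint ?sub0set ?subUset ?star_pairs //; last first.
    by rewrite disjoint_sym disjoints0.
  rewrite cards0 expr0 mul1r; apply: ler_wiXn2l; rewrite ?subr_ge0 ?lerBlDr ?lerDl //.
  by apply: card_starU; rewrite eq_sym.
rewrite (eq_bigl (predC1 u)) => [|v]; last by rewrite in_setT.
by rewrite sumr_const cardC1 card_ord mulr_natl.
Qed.

End Moments.

Section Inequalities.
Variable R : realFieldType.

Lemma bernoulli_ineq (p : R) k : 0 <= p -> p <= 1 -> 1 - k%:R * p <= (1 - p) ^+ k.
Proof.
move=> p0 p1; elim: k => [|k IH]; first by rewrite mul0r subr0 expr0.
have q0 : 0 <= (1 - p) ^+ k by rewrite exprn_ge0 // subr_ge0.
have k0 : 0 <= k%:R :> R by rewrite ler0n.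
rewrite exprS -natr1; nra.
Qed.

Lemma bernoulli_ineq2 (p : R) k : 0 <= p ->
  1 + k%:R * p + k%:R * (k%:R - 1) / 2 * p ^+ 2 <= (1 + p) ^+ k.
Proof.
move=> p0; elim: k => [|k IH]; first by rewrite !mul0r !addr0 expr0.
have k0 : 0 <= k%:R :> R by rewrite ler0n.
apply: le_trans (_ : (1 + k%:R * p + k%:R * (k%:R - 1) / 2 * p ^+ 2) * (1 + p) <= _).
  have -> : (1 + k%:R * p + k%:R * (k%:R - 1) / 2 * p ^+ 2) * (1 + p) =
      1 + k.+1%:R * p + k.+1%:R * (k.+1%:R - 1) / 2 * p ^+ 2 + k%:R * (k%:R - 1) / 2 * p ^+ 3.
    by rewrite -natr1; field.
  rewrite lerDl; case: k {IH} k0 => [|k] k0; first by rewrite !mul0r.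
  by rewrite -natr1 addrK !mulr_ge0 ?exprn_ge0 ?invr_ge0 ?addr_ge0 ?ler0n.
have p1 : 0 <= 1 + p by lra.
by rewrite [leRHS]exprSr; nra.
Qed.

Lemma exprn_one_sub_bound (p : R) k : 0 <= p -> p <= 1 ->
  (1 - p) ^+ k * (1 + k%:R * p + k%:R * (k%:R - 1) / 2 * p ^+ 2) <= 1.
Proof.
move=> p0 p1; apply: le_trans (_ : (1 - p) ^+ k * (1 + p) ^+ k <= 1).
  by rewrite ler_wpM2l ?bernoulli_ineq2 // exprn_ge0 // subr_ge0.
rewrite -exprMn exprn_ile1 //; nra.
Qed.

Lemma deficit_lower_bound (x p q : R) : 0 <= p -> 10 * p <= x -> x + p <= 1 -> 0 <= q ->
  q * (1 + x + (x * x - x * p) / 2) <= 1 ->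
  x / 2 + (1 / 15 + 1 / 500) * (x + p) <= 1 - q.
Proof.
move=> p0 px xp1 q0 qB.
have x0 : 0 <= x by lra.
have x1 : x <= 1 by lra.
set y := (x * x - x * p) / 2 in qB *.
have yx : 9 / 20 * (x * x) <= y by rewrite /y; nra.
have B0 : 0 < 1 + x + y by nra.
have slope : x / 2 + (1 / 15 + 1 / 500) * (x + p) <= 5756 / 10000 * x by lra.
have main : 5756 / 10000 * x * (1 + x + y) <= x + y.
  (* with y >= 9 x^2 / 20, this reduces to a cubic in x that is positive on [0, 1] *)
  have : 0 <= x * (4244 / 10000 - 1256 / 10000 * x - 259 / 1000 * (x * x)) by nra.
  nra.
have : (1 + x + y) * (x / 2 + (1 / 15 + 1 / 500) * (x + p) - (1 - q)) <= 0 by nra.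
by rewrite pmulr_rle0 // subr_le0.
Qed.

End Inequalities.

Section Concentration.
Variables (R : realType) (N : nat) (p : R).
Hypotheses (p_ge0 : 0 <= p) (pN_le1 : p * N%:R <= 1) (N_ge11 : (11 <= N)%N).

Local Notation graph := {set {set 'I_N}}.
Local Notation L := (p * N%:R ^+ 2).
Local Notation Ex := (@Ex R N p).
Local Notation Var := (@Var R N p).
Local Notation nedges := (fun G : graph => (#|G|%:R : R)).
Local Notation nisolated := (fun G : graph => (#|isolated G|%:R : R)).

Lemma natr_pred : N.-1%:R = N%:R - 1 :> R.
Proof. by rewrite -subn1 natrB //; lia. Qed.

Lemma p_le1 : p <= 1.
Proof. by apply: le_trans pN_le1; rewrite ler_peMr // ler1n; lia. Qed.

Lemma Ex_nedges : Ex nedges = N%:R * (N%:R - 1) / 2 * p.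
Proof.
rewrite Ex_card; congr (_ * _).
have /(congr1 (fun n => n%:R : R)) := card_pairs N.
by rewrite !natrM natr_pred => <-; field.
Qed.

Lemma Ex_nedges_le : Ex nedges <= L.
Proof.
have := mulr_ge0 p_ge0 (ler0n R N); have := mulr_ge0 p_ge0 (exprn_ge0 2 (ler0n R N)).
rewrite Ex_nedges; lra.
Qed.

Lemma Var_nedges_le : Var nedges <= L.
Proof.
have := Ex_card_sqr N p; rewrite /Var Ex_card => h.
apply: le_trans (_ : #|pairs N|%:R * p <= _); first lra.
by rewrite -Ex_card Ex_nedges_le.
Qed.

Lemma Var_nisolated_le : Var nisolated <= 2 * L.
Proof.
set s := (1 - p) ^+ N.-2.
have qs : (1 - p) ^+ N.-1 = s * (1 - p) by rewrite /s -exprSr; congr (_ ^+ _); lia.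
have s0 : 0 <= s by rewrite exprn_ge0 // subr_ge0 p_le1.
have s1 : s <= 1 by rewrite exprn_ile1 // ?subr_ge0 ?p_le1 // lerBlDr lerDl.
have sb : 1 - N.-2%:R * p <= s := bernoulli_ineq _ p_ge0 p_le1.
have N2 : N.-2%:R <= N%:R :> R by rewrite ler_nat; lia.
have b1 : N%:R * (s * (1 - p) * (1 - s)) <= N%:R * (N%:R * p).
  apply: ler_wpM2l; first exact: ler0n.
  apply: le_trans (_ : 1 * (1 - s) <= _).
    apply: ler_wpM2r; first lra.
    by rewrite mulr_ile1 ?subr_ge0 ?p_le1 // lerBlDr lerDl.
  by rewrite mul1r; apply: le_trans (ler_wpM2r p_ge0 N2); lra.
have b2 : N%:R ^+ 2 * p * (s * (1 - p) * s) <= N%:R ^+ 2 * p * 1.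
  apply: ler_wpM2l; first by rewrite mulr_ge0 // exprn_ge0.
  by rewrite !mulr_ile1 ?subr_ge0 ?p_le1 // ?mulr_ge0 ?subr_ge0 ?p_le1 // lerBlDr lerDl.
have := Ex_card_isolated_sqr N p_ge0 p_le1.
rewrite /Var Ex_card_isolated exprD -/s qs natr_pred; lra.
Qed.

Lemma Ex_nedges_nisolated_le : Ex nedges + Ex nisolated + L / 15 + L / 500 <= N%:R.
Proof.
have qB : (1 - p) ^+ N.-1 * (1 + (N%:R - 1) * p +
            ((N%:R - 1) * p * ((N%:R - 1) * p) - (N%:R - 1) * p * p) / 2) <= 1.
  apply: le_trans (exprn_one_sub_bound N.-1 p_ge0 p_le1).
  by rewrite natr_pred le_eqVlt; apply/orP; left; apply/eqP; ring.
have N11 : (11 : R) <= N%:R by rewrite ler_nat.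
have px : 10 * p <= (N%:R - 1) * p by apply: (ler_wpM2r p_ge0); lra.
have xp : (N%:R - 1) * p + p <= 1 by have := pN_le1; lra.
have q0 : 0 <= (1 - p) ^+ N.-1 by rewrite exprn_ge0 // subr_ge0 p_le1.
have := ler_wpM2l (ler0n R N) (deficit_lower_bound p_ge0 px xp q0 qB).
rewrite Ex_nedges Ex_card_isolated; lra.
Qed.

Lemma ex_path_between_of_concentrated n (G : graph) : (2 <= n)%N -> G \subset pairs N ->
  #|G|%:R < Ex nedges + L / 1000 -> #|isolated G|%:R < Ex nisolated + L / 1000 ->
  (1 / 15 * p * N%:R ^+ 2 <= (ex_path G n.+1)%:R) &&
  ((ex_path G n.+1)%:R <= 2 * p * N%:R ^+ 2).
Proof.
move=> n2 Gp hm hI.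
have hc : (#|cover G|%:R : R) <= (ex_path G n.+1)%:R + #|G|%:R.
  by rewrite -natrD ler_nat card_cover_leq_ex_path.
have hl : ((ex_path G n.+1)%:R : R) <= #|G|%:R by rewrite ler_nat ex_path_leq_card.
have hC : (#|cover G|%:R : R) + #|isolated G|%:R = N%:R.
  by rewrite -natrD cardsC card_ord.
have := Ex_nedges_nisolated_le; have := Ex_nedges_le.
have := mulr_ge0 p_ge0 (exprn_ge0 2 (ler0n R N)).
by move=> *; apply/andP; split; lra.
Qed.

Lemma gnp_prob_ex_path_between n : (2 <= n)%N -> 0 < L ->
  1 - 3 * 10 ^+ 6 / L <= gnp_prob p (fun G : graph =>
    (1 / 15 * p * N%:R ^+ 2 <= (ex_path G n.+1)%:R) &&
    ((ex_path G n.+1)%:R <= 2 * p * N%:R ^+ 2)).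
Proof.
move=> n2 L0; have t0 : 0 < L / 1000 by rewrite divr_gt0.
apply: le_trans (gnp_prob_union_bound p_ge0 p_le1
  (A := fun G => Ex nedges + L / 1000 <= #|G|%:R)
  (B := fun G => Ex nisolated + L / 1000 <= #|isolated G|%:R) _); last first.
  by move=> G Gp; rewrite -!ltNge; exact: ex_path_between_of_concentrated.
have u0 : 0 <= ((L / 1000) ^+ 2)^-1 by rewrite invr_ge0 exprn_ge0 // ltW.
have Lu : L * ((L / 1000) ^+ 2)^-1 = 10 ^+ 6 / L.
  by move: L0; set l := L => l0; field; rewrite gt_eqF.
have := ler_wpM2r u0 Var_nedges_le; have := ler_wpM2r u0 Var_nisolated_le.
have := gnp_prob_chebyshev p_ge0 p_le1 nedges t0.
have := gnp_prob_chebyshev p_ge0 p_le1 nisolated t0.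
lra.
Qed.

End Concentration.

Lemma aas_of_inv_bound (R : realType) (P x : nat -> R) (C : R) (N0 : nat) :
  0 < C -> tends_to_infty x ->
  (forall N, (N0 <= N)%N -> 0 < x N -> 1 - C / x N <= P N) -> aas P.
Proof.
move=> C0 x_oo HP eps eps0.
have Ceps : 0 < C / eps by rewrite divr_gt0.
have [N1 HN1] := x_oo (C / eps).
exists (maxn N0 N1) => N; rewrite geq_max => /andP [N0N /HN1 xN].
have x0 : 0 < x N := lt_le_trans Ceps xN.
apply: le_trans (HP N N0N x0); rewrite lerD2l lerN2 ler_pdivrMr // mulrC.
by rewrite -ler_pdivrMr.
Qed.

Lemma aas_le (R : realType) (P Q : nat -> R) : (forall N, P N <= Q N) -> aas P -> aas Q.
Proof.
move=> PQ hP eps /hP [N0 h]; exists N0 => N /h le_eps.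
exact: le_trans le_eps (PQ N).
Qed.

Lemma tends_to_infty_natr (R : realType) : tends_to_infty (fun N => 1 / N%:R * N%:R ^+ 2 : R).
Proof.
move=> M; exists (Num.Def.archi_bound `|M|).+1 => N hN.
have N0 : (0 : R) < N%:R by rewrite ltr0n (leq_trans _ hN).
have -> : 1 / N%:R * N%:R ^+ 2 = N%:R :> R by rewrite expr2; field; rewrite gt_eqF.
apply: le_trans (ler_norm M) _; apply: le_trans (ltW (archi_boundP (normr_ge0 M))) _.
by rewrite ler_nat ltnW.
Qed.

Lemma aas_ex_path_between (R : realType) (n : nat -> nat) (p : nat -> R) :
  (forall N, (2 <= n N)%N) -> (forall N, 0 <= p N) ->
  (forall N, (0 < N)%N -> p N <= 1 / N%:R) ->
  tends_to_infty (fun N => p N * N%:R ^+ 2) ->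
  aas (fun N => gnp_prob (p N) (fun G : {set {set 'I_N}} =>
     (1 / 15 * p N * N%:R ^+ 2 <= (ex_path G (n N).+1)%:R) &&
     ((ex_path G (n N).+1)%:R <= 2 * p N * N%:R ^+ 2))).
Proof.
move=> n2 p0 pN L_oo.
apply: (aas_of_inv_bound (C := 3 * 10 ^+ 6) (N0 := 11)) L_oo _ => [|N N11 L0].
  by rewrite mulr_gt0 ?exprn_gt0.
apply: gnp_prob_ex_path_between => //.
have N0 : (0 : R) < N%:R by rewrite ltr0n; lia.
by rewrite -ler_pdivlMr //; apply: pN; lia.
Qed.

Theorem proposition1p3 (R : realType) :
  (exists c1 c2 : R, 0 < c1 /\ 0 < c2 /\
     forall (n : nat -> nat) (p : nat -> R),
       (forall N, (2 <= n N)%N) ->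
       (forall N, 0 <= p N) ->
       (forall N, (0 < N)%N -> p N <= 1 / N%:R) ->
       tends_to_infty (fun N => p N * (N%:R) ^+ 2) ->
       aas (fun N => gnp_prob (p N)
              (fun G : {set {set 'I_N}} => (c1 * p N * (N%:R) ^+ 2 <= (ex_path G (n N).+1)%:R)
                        && ((ex_path G (n N).+1)%:R <= c2 * p N * (N%:R) ^+ 2))))
  /\
  (forall n : nat -> nat, (forall N, (2 <= n N)%N) ->
     aas (fun N => gnp_prob (1 / N%:R : R)
            (fun G : {set {set 'I_N}} => (N%:R / 15 : R) <= (ex_path G (n N).+1)%:R))).
Proof.
split.
  by exists (1 / 15), 2; do 2 (split; first lra); exact: aas_ex_path_between.
move=> n n2.
have p0 N : (0 : R) <= 1 / N%:R by rewrite divr_ge0 ?ler0n.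
have p1 N : (1 : R) / N%:R <= 1.
  by case: N => [|N]; rewrite mul1r ?invr0 ?ler01 // invf_le1 ?ltr0Sn // ler1n.
have c1E N : 1 / 15 * (1 / N%:R) * N%:R ^+ 2 = N%:R / 15 :> R.
  have [-> | N0] := eqVneq (N%:R : R) 0; first by rewrite expr0n mulr0 mul0r.
  by field.
have := aas_ex_path_between (p := fun N => 1 / N%:R : R) n2 p0 (fun _ _ => lexx _)
  (@tends_to_infty_natr R).
apply: aas_le => N /=; apply: ler_gnp_prob => // G _ /andP [+ _].
by rewrite c1E.
Qed.
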